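(* Let $\nu$ be a lattice path from $(0,0)$ to $(\ell-n,n)$ with $n\ge 1$, let $f_0$ be the largest index with $b_{f_0}(\nu)=0$, let $\nu^{\#}$ be the path obtained from $\nu$ by deleting its first $f_0+1$ steps (translated to start at the origin), and for $\vec{\mathsf b}=(\mathsf b_0,\dots,\mathsf b_\ell)\in\mathrm{Vec}(\nu)$ let $\vec{\mathsf b}^{\#}=(\mathsf b_{f_0+1}-1,\mathsf b_{f_0+2}-1,\dots,\mathsf b_\ell-1)$, which lies in $\mathrm{Vec}(\nu^{\#})$. If $\vec{\mathsf b}$ is $t$-$\mathsf{Pop}$-sortable in $\mathrm{Vec}(\nu)$, then $\vec{\mathsf b}^{\#}$ is $t$-$\mathsf{Pop}$-sortable in $\mathrm{Vec}(\nu^{\#})$.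
   Context: Lattice paths use unit steps N$=(0,1)$, E$=(1,0)$. For a path $\nu$ with $\ell$ steps from $(0,0)$ to $(\ell-n,n)$, $\mathbf b(\nu)=(b_0(\nu),\dots,b_\ell(\nu))$ lists the heights ($y$-coordinates) of the successive lattice points of $\nu$, and $f_k$ ($0\le k\le n$) is the largest index with $b_{f_k}(\nu)=k$. $\mathrm{Vec}(\nu)$ is the set of integer vectors $(\mathsf b_0,\dots,\mathsf b_\ell)$ such that (1) $\mathsf b_{f_k}=k$ for all $k=0,\dots,n$; (2) $b_i(\nu)\le\mathsf b_i\le n$ for all $i$; (3) if $\mathsf b_i=k$ then $\mathsf b_j\le k$ for all $i+1\le j\le f_k$. With the componentwise order, $\mathrm{Vec}(\nu)$ is a finite lattice (isomorphic to the $\nu$-Tamari lattice $\mathrm{Tam}(\nu)$) with minimum $\hat 0$. For a finite lattice $M$, $\mathsf{Pop}_M(x)=\bigwedge(\{y: y\lessdot x\}\cup\{x\})$, and $x$ is $t$-$\mathsf{Pop}$-sortable if $\mathsf{Pop}_M^t(x)=\hat 0$. *)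

From mathcomp Require Import all_boot.
Set Implicit Arguments. Unset Strict Implicit. Unset Printing Implicit Defensive.

(* A lattice path nu is a seq bool: true = N step (0,1), false = E step (1,0).
   ell = size nu, n = count id nu (number of N steps). *)

Definition ell (nu : seq bool) : nat := size nu.
Definition nN (nu : seq bool) : nat := count id nu.

Definition bh (nu : seq bool) (i : nat) : nat := count id (take i nu).

Definition fk (nu : seq bool) (k : nat) : nat :=
  last 0 [seq i <- iota 0 (ell nu).+1 | bh nu i == k].

(* Vectors are seq nat of length ell+1; entry i is nth 0 v i. *)
Definition inVec (nu : seq bool) (v : seq nat) : bool :=
  [&& size v == (ell nu).+1,
      all (fun k => nth 0 v (fk nu k) == k) (iota 0 (nN nu).+1),
      all (fun i => (bh nu i <= nth 0 v i) && (nth 0 v i <= nN nu))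
          (iota 0 (ell nu).+1) &
      all (fun i => all (fun j => (i.+1 <= j) && (j <= fk nu (nth 0 v i))
                                 ==> (nth 0 v j <= nth 0 v i))
                        (iota 0 (ell nu).+1))
          (iota 0 (ell nu).+1)].

Fixpoint allseqs (m n : nat) : seq (seq nat) :=
  match m with
  | 0 => [:: [::]]
  | m'.+1 => [seq x :: s | x <- iota 0 n.+1, s <- allseqs m' n]
  end.

Definition Vec (nu : seq bool) : seq (seq nat) :=
  [seq v <- allseqs (ell nu).+1 (nN nu) | inVec nu v].

Definition vle (x y : seq nat) : bool := all2 leq x y.
Definition vlt (x y : seq nat) : bool := vle x y && (x != y).

Definition covby (nu : seq bool) (y x : seq nat) : bool :=
  [&& y \in Vec nu, vlt y x & ~~ has (fun z => vlt y z && vlt z x) (Vec nu)].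

Definition isglb (nu : seq bool) (S : seq (seq nat)) (m : seq nat) : bool :=
  [&& m \in Vec nu, all (vle m) S &
      all (fun z => all (vle z) S ==> vle z m) (Vec nu)].

Definition Pop (nu : seq bool) (x : seq nat) : seq nat :=
  let S := x :: [seq y <- Vec nu | covby nu y x] in
  head x [seq m <- Vec nu | isglb nu S m].

Definition bottom (nu : seq bool) : seq nat :=
  head [::] [seq m <- Vec nu | all (vle m) (Vec nu)].

Definition pop_sortable (nu : seq bool) (t : nat) (x : seq nat) : Prop :=
  iter t (Pop nu) x = bottom nu.

Definition nu_sharp (nu : seq bool) : seq bool := drop (fk nu 0).+1 nu.

Definition vec_sharp (nu : seq bool) (v : seq nat) : seq nat :=
  [seq x.-1 | x <- drop (fk nu 0).+1 v].

From mathcomp Require Import all_boot zify.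
Set Implicit Arguments. Unset Strict Implicit. Unset Printing Implicit Defensive.

(* Write [F] for f_0.  Every vector of Vec(nu) is positive after [F], and b |-> b^# is
   monotone.  Conversely, any z <= x^# in Vec(nu^#) lifts to the vector that agrees
   with x up to [F] and equals z + 1 afterwards; this lift lies in Vec(nu), below x.
   Hence ^# maps the elements covered by x onto those covered by x^# (a cover may
   collapse onto x^# itself), and it commutes with meets, which are componentwise
   minima.  So (Pop x)^# = Pop (x^#).  The minimum of Vec(nu) is the height vector
   b(nu), and b(nu)^# = b(nu^#), so iterating Pop gives the claim. *)

Lemma vleP (x y : seq nat) : size x = size y ->
  reflect (forall i, nth 0 x i <= nth 0 y i) (vle x y).
Proof.
rewrite /vle; elim: x y => [|a x IH] [|b y] //= => [_|[Hs]].
  by apply: (iffP idP) => // _ [].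
apply: (iffP andP) => [[Hab /(IH _ Hs) H] [|i] //=|H].
split; first exact: (H 0).
by apply/(IH _ Hs) => i; exact: (H i.+1).
Qed.

Lemma vle_size (x y : seq nat) : vle x y -> size x = size y.
Proof. by rewrite /vle all2E => /andP[/eqP]. Qed.

Lemma vle_nth (x y : seq nat) i : vle x y -> nth 0 x i <= nth 0 y i.
Proof. by move=> Hxy; move/vleP: Hxy (vle_size Hxy) => Hxy /Hxy. Qed.

Lemma vle_refl (x : seq nat) : vle x x.
Proof. exact/vleP. Qed.

Lemma vle_trans (x y z : seq nat) : vle x y -> vle y z -> vle x z.
Proof.
move=> Hxy Hyz; apply/vleP => [|i]; first by rewrite (vle_size Hxy) (vle_size Hyz).
exact: leq_trans (vle_nth i Hxy) (vle_nth i Hyz).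
Qed.

Lemma vle_anti (x y : seq nat) : vle x y -> vle y x -> x = y.
Proof.
move=> Hxy Hyx; apply: (eq_from_nth (x0 := 0)) (vle_size Hxy) _ => i _.
by apply/anti_leq; rewrite vle_nth ?vle_nth.
Qed.

Lemma vle_sumn (x y : seq nat) : vle x y -> sumn x <= sumn y.
Proof.
rewrite /vle; elim: x y => [|a x IH] [|b y] //= /andP[Hab Hxy].
by rewrite leq_add ?IH.
Qed.

Lemma vlt_sumn (x y : seq nat) : vlt x y -> sumn x < sumn y.
Proof.
rewrite /vlt /vle; elim: x y => [|a x IH] [|b y] //= /andP[/andP[Hab Hxy]].
rewrite eqseq_cons negb_and => /orP[Hne|Hne].
  by rewrite -addSn leq_add ?vle_sumn // ltn_neqAle Hne.
by rewrite -addnS leq_add ?IH // Hxy.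
Qed.

Lemma vle_cat (s1 s2 t1 t2 : seq nat) : size s1 = size t1 ->
  vle (s1 ++ s2) (t1 ++ t2) = vle s1 t1 && vle s2 t2.
Proof. by rewrite /vle; elim: s1 t1 => [|a s1 IH] [|b t1] //= [/IH ->]; rewrite andbA. Qed.

Lemma vle_take_drop n (x y : seq nat) : vle x y ->
  vle (take n x) (take n y) /\ vle (drop n x) (drop n y).
Proof.
move=> Hxy; have Hs := vle_size Hxy.
by apply/andP; rewrite -vle_cat ?size_take ?Hs // !cat_take_drop.
Qed.

Lemma vle_map (f : nat -> nat) (x y : seq nat) : {homo f : m n / m <= n} ->
  vle x y -> vle (map f x) (map f y).
Proof. by move=> f_mono; rewrite /vle; elim: x y => [|a x IH] [|b y] //= /andP[/f_mono -> /IH]. Qed.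

Lemma mem_allseqs m n (s : seq nat) :
  (s \in allseqs m n) = (size s == m) && all (fun x => x <= n) s.
Proof.
elim: m s => [|m IH] s; first by case: s.
have -> : allseqs m.+1 n = [seq x :: s | x <- iota 0 n.+1, s <- allseqs m n] by [].
apply/allpairsP/idP => [[[x y]] [Hx Hy ->]|].
  by move: Hx Hy; rewrite mem_iota IH => /= Hx /andP[/eqP -> ->]; rewrite eqxx andbT.
case: s => [//|a s] /and3P[Hs Ha Has].
by exists (a, s); rewrite mem_iota IH -eqSS Hs /= ltnS Ha.
Qed.

Lemma last_filter_iota_max (P : pred nat) m : (exists2 i, i < m & P i) ->
  let l := last 0 [seq i <- iota 0 m | P i] in
  [/\ l < m, P l & forall i, i < m -> P i -> i <= l].
Proof.
elim: m => [[i //]|m IH] Hex.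
rewrite -addn1 iotaD filter_cat last_cat add0n /=.
case: ifP => Pm /=; first by split => // [|i]; rewrite addn1 ?ltnS.
have ltm i : i < m.+1 -> P i -> i < m.
  by move=> Hi Pi; rewrite ltn_neqAle -ltnS Hi andbT; apply: contraFneq Pm => <-.
have [l_lt Pl l_max] := IH (let: ex_intro2 i Hi Pi := Hex in ex_intro2 _ _ i (ltm i Hi Pi) Pi).
split => //; first by rewrite addn1 ltnW.
by move=> i; rewrite addn1 => Hi Pi; apply: l_max (ltm i Hi Pi) Pi.
Qed.

Lemma bh0 nu : bh nu 0 = 0.
Proof. by rewrite /bh take0. Qed.

Lemma bhD nu i j : bh nu (i + j) = bh nu i + count id (take j (drop i nu)).
Proof. by rewrite /bh takeD count_cat. Qed.

Lemma bh_mono nu i j : i <= j -> bh nu i <= bh nu j.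
Proof. by move=> Hij; rewrite -(subnKC Hij) bhD leq_addr. Qed.

Lemma bhS_le nu i : bh nu i.+1 <= (bh nu i).+1.
Proof.
rewrite -addn1 bhD -[(bh nu i).+1]addn1 leq_add2l.
by case: (drop i nu) => [|[] ?]; rewrite /= ?take0.
Qed.

Lemma bh_ell nu i : ell nu <= i -> bh nu i = nN nu.
Proof. by move=> Hi; rewrite /bh take_oversize. Qed.

Lemma bh_le_nN nu i : bh nu i <= nN nu.
Proof.
case: (leqP i (ell nu)) => Hi; last by rewrite bh_ell // ltnW.
by rewrite -(bh_ell (leqnn _)) bh_mono.
Qed.

(* Heights grow by unit steps, so every height up to [nN nu] is attained. *)
Lemma bh_onto nu k : k <= nN nu -> exists2 i, i <= ell nu & bh nu i = k.
Proof.
rewrite -(bh_ell (leqnn (ell nu))).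
elim: (ell nu) k => [|i IH] k Hk; first by exists 0; move: Hk; rewrite bh0 leqn0 => /eqP.
case: (leqP k (bh nu i)) => Hki; first by have [j ? ?] := IH k Hki; exists j => //; lia.
by exists i.+1 => //; have := bhS_le nu i; lia.
Qed.

Lemma fk_le nu k : fk nu k <= ell nu.
Proof.
have := mem_last 0 [seq i <- iota 0 (ell nu).+1 | bh nu i == k].
by rewrite inE mem_filter mem_iota ltnS -/(fk nu k) => /orP[/eqP -> //|/and3P[]].
Qed.

Lemma fk_spec nu k : k <= nN nu ->
  [/\ bh nu (fk nu k) = k, fk nu k <= ell nu &
      forall i, i <= ell nu -> (bh nu i <= k) = (i <= fk nu k)].
Proof.
move=> Hk; have [i Hi Ei] := bh_onto Hk.
have [f_lt /eqP f_k f_max] := @last_filter_iota_max (fun i => bh nu i == k) (ell nu).+1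
  (ex_intro2 _ _ i Hi (introT eqP Ei)).
rewrite -/(fk nu k) in f_lt f_k f_max.
split=> // j Hj; apply/idP/idP => [Hjk|]; last by rewrite -{2}f_k; apply: bh_mono.
rewrite leqNgt; apply/negP => Hfj.
suff : j <= fk nu k by rewrite leqNgt Hfj.
by rewrite f_max ?ltnS // eqn_leq Hjk -{1}f_k bh_mono // ltnW.
Qed.

Lemma fk_unique nu k a : k <= nN nu -> a <= ell nu ->
  (forall i, i <= ell nu -> (bh nu i <= k) = (i <= a)) -> fk nu k = a.
Proof.
move=> Hk Ha Hchar; have [_ Hf Hle] := fk_spec Hk.
by apply/anti_leq; rewrite -Hchar // Hle // leqnn -Hle // Hchar // leqnn.
Qed.

Lemma inVecP nu v : reflect
  [/\ size v = (ell nu).+1,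
      forall k, k <= nN nu -> nth 0 v (fk nu k) = k,
      forall i, i <= ell nu -> bh nu i <= nth 0 v i <= nN nu &
      forall i j, i <= ell nu -> j <= ell nu -> i < j -> j <= fk nu (nth 0 v i) ->
                  nth 0 v j <= nth 0 v i]
  (inVec nu v).
Proof.
have mem_iota0 m i : (i \in iota 0 m.+1) = (i <= m) by rewrite mem_iota.
apply: (iffP and4P) => [[/eqP Hs /allP Hf /allP Hb /allP Hj]|[Hs Hf Hb Hj]]; split.
- exact: Hs.
- by move=> k Hk; apply/eqP/Hf; rewrite mem_iota0.
- by move=> i Hi; apply/Hb; rewrite mem_iota0.
- move=> i j Hi Hj' Hij Hfj.
  have := Hj i; rewrite mem_iota0 => /(_ Hi) /allP /(_ j).
  by rewrite mem_iota0 Hij Hfj; apply.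
- by rewrite Hs.
- by apply/allP => k; rewrite mem_iota0 => Hk; apply/eqP/Hf.
- by apply/allP => i; rewrite mem_iota0; apply: Hb.
- apply/allP => i; rewrite mem_iota0 => Hi; apply/allP => j; rewrite mem_iota0 => Hj'.
  by apply/implyP => /andP[]; apply: Hj.
Qed.

Lemma memVec nu v : (v \in Vec nu) = inVec nu v.
Proof.
rewrite /Vec mem_filter andbC; case Hv: (inVec nu v); rewrite ?andbF // andbT.
move/inVecP: Hv => [Hs _ Hb _].
rewrite mem_allseqs Hs eqxx; apply/(all_nthP 0) => i Hi.
by move: (Hb i); rewrite -ltnS -Hs => /(_ Hi) /andP[].
Qed.

Lemma Vec_size nu v : v \in Vec nu -> size v = (ell nu).+1.
Proof. by rewrite memVec => /inVecP[-> _ _ _]. Qed.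

Lemma mem_head_filter (T : eqType) (P : pred T) (s : seq T) x0 m :
  m \in s -> P m -> head x0 [seq y <- s | P y] \in [seq y <- s | P y].
Proof.
move=> Hm Pm; have : m \in [seq y <- s | P y] by rewrite mem_filter Pm.
by case: [seq y <- s | P y] => //= a l _; rewrite mem_head.
Qed.

Definition vmin (a b : seq nat) : seq nat :=
  mkseq (fun i => minn (nth 0 a i) (nth 0 b i)) (size a).

Lemma size_vmin a b : size (vmin a b) = size a.
Proof. exact: size_mkseq. Qed.

Lemma nth_vmin a b i : size a = size b ->
  nth 0 (vmin a b) i = minn (nth 0 a i) (nth 0 b i).
Proof.
move=> Hs; case: (ltnP i (size a)) => Hi; first by rewrite nth_mkseq.
by rewrite !nth_default ?size_vmin // -Hs.
Qed.

Lemma vmin_id a : vmin a a = a.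
Proof.
by apply: (eq_from_nth (x0 := 0)) => [|i _]; rewrite ?size_vmin ?nth_vmin ?minnn.
Qed.

Lemma vle_vmin z a b : size a = size b ->
  vle z (vmin a b) = vle z a && vle z b.
Proof.
move=> Hs; apply/idP/andP => [Hz|[Hza Hzb]].
  have Sz : size z = size a by rewrite (vle_size Hz) size_vmin.
  have Hzi i : nth 0 z i <= minn (nth 0 a i) (nth 0 b i) by rewrite -nth_vmin ?vle_nth.
  by split; apply/vleP => [|i]; rewrite -?Hs //; have := Hzi i; rewrite leq_min => /andP[].
apply/vleP => [|i]; first by rewrite size_vmin (vle_size Hza).
by rewrite nth_vmin // leq_min !vle_nth.
Qed.

Lemma vmin_Vec nu a b : a \in Vec nu -> b \in Vec nu -> vmin a b \in Vec nu.
Proof.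
rewrite !memVec => /inVecP[Sa Fa Ba Ja] /inVecP[Sb Fb Bb Jb].
have Sab : size a = size b by rewrite Sa Sb.
apply/inVecP; split.
- by rewrite size_vmin.
- by move=> k Hk; rewrite nth_vmin // Fa // Fb // minnn.
- by move=> i Hi; rewrite nth_vmin //; have := Ba i Hi; have := Bb i Hi; lia.
- move=> i j Hi Hj Hij; rewrite !nth_vmin //.
  case: (leqP (nth 0 a i) (nth 0 b i)) => Hab Hf.
  + by have := Ja i j Hi Hj Hij Hf; lia.
  + by have := Jb i j Hi Hj Hij Hf; lia.
Qed.

Lemma foldr_vmin_glb nu x C : x \in Vec nu -> all (mem (Vec nu)) C ->
  isglb nu (x :: C) (foldr vmin x C).
Proof.
move=> Hx HC.
have [Hm Hle] : foldr vmin x C \in Vec nu /\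
    forall z, vle z (foldr vmin x C) = all (vle z) (x :: C).
  elim: C HC => [|c C IH]; first by split=> // z; rewrite [RHS]andbT.
  case/andP=> Hc /IH[Hm Hle]; split; first exact: vmin_Vec.
  move=> z; rewrite [foldr _ _ _]/= vle_vmin ?(Vec_size Hc) ?(Vec_size Hm) //.
  by rewrite Hle [all _ (x :: c :: C)]/= andbCA.
apply/and3P; split=> //; first by rewrite -Hle vle_refl.
by apply/allP => z _; rewrite Hle implybb.
Qed.

Lemma isglb_lb nu S m y : isglb nu S m -> y \in S -> vle m y.
Proof. by case/and3P=> _ /allP HmS _; apply: HmS. Qed.

Lemma isglb_max nu S m z : isglb nu S m -> z \in Vec nu ->
  {in S, forall y, vle z y} -> vle z m.
Proof. by case/and3P=> _ _ /allP Hmax /Hmax /implyP Hz HzS; apply/Hz/allP. Qed.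

Definition Pop_set nu x := x :: [seq y <- Vec nu | covby nu y x].

Lemma mem_Pop_set nu x y : (y \in Pop_set nu x) = (y == x) || covby nu y x.
Proof.
rewrite inE mem_filter; congr (_ || _).
by apply/andP/idP => [[] //|Hc]; split=> //; case/and3P: Hc.
Qed.

Lemma Pop_set_Vec nu x y : x \in Vec nu -> y \in Pop_set nu x -> y \in Vec nu.
Proof. by move=> Hx; rewrite mem_Pop_set => /orP[/eqP -> // | /and3P[]]. Qed.

Lemma Pop_glb nu x : x \in Vec nu -> isglb nu (Pop_set nu x) (Pop nu x).
Proof.
move=> Hx; have HC : all (mem (Vec nu)) [seq y <- Vec nu | covby nu y x].
  by apply/allP => y; rewrite mem_filter => /andP[].
have Hglb := foldr_vmin_glb Hx HC.
have Hglb_mem : foldr vmin x [seq y <- Vec nu | covby nu y x] \in Vec nu.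
  by case/and3P: Hglb.
(* Unfolding [Pop] by conversion would also try to evaluate [Vec nu]. *)
change (Pop nu x) with (head x [seq m <- Vec nu | isglb nu (Pop_set nu x) m]).
by have := mem_head_filter x Hglb_mem Hglb; rewrite mem_filter => /andP[].
Qed.

Lemma Pop_Vec nu x : x \in Vec nu -> Pop nu x \in Vec nu.
Proof. by case/Pop_glb/and3P. Qed.

Lemma vlt_covby nu x y : y \in Vec nu -> vlt y x ->
  exists2 y', covby nu y' x & vle y y'.
Proof.
move=> Hy Hyx; move: {2}(sumn x - sumn y) (leqnn (sumn x - sumn y)) => d.
elim: d y Hy Hyx => [|d IH] y Hy Hyx Hd; first by have := vlt_sumn Hyx; lia.
have [/hasP[z Hz /andP[Hyz Hzx]]|Hc] := boolP (has (fun z => vlt y z && vlt z x) (Vec nu)).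
  have Hd' : sumn x - sumn z <= d by have := vlt_sumn Hyz; lia.
  have [y' Hy'x Hzy'] := IH z Hz Hzx Hd'.
  by exists y' => //; apply: vle_trans Hzy'; case/andP: Hyz.
by exists y; rewrite ?vle_refl // /covby Hy Hyx.
Qed.

Lemma iter_Pop_Vec nu t x : x \in Vec nu -> iter t (Pop nu) x \in Vec nu.
Proof. by move=> Hx; elim: t => //= t; apply: Pop_Vec. Qed.

Definition height_vec nu := mkseq (bh nu) (ell nu).+1.

Lemma height_vec_Vec nu : height_vec nu \in Vec nu.
Proof.
rewrite memVec; apply/inVecP; split.
- exact: size_mkseq.
- by move=> k Hk; have [Hf Hfl _] := fk_spec Hk; rewrite nth_mkseq.
- by move=> i Hi; rewrite nth_mkseq // leqnn bh_le_nN.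
- move=> i j Hi Hj _; have [_ _ Hle] := fk_spec (bh_le_nN nu i).
  by rewrite !nth_mkseq // Hle.
Qed.

Lemma height_vec_le nu v : v \in Vec nu -> vle (height_vec nu) v.
Proof.
move=> Hv; move: (Hv); rewrite memVec => /inVecP[Hs _ Hb _].
apply/vleP => [|i]; first by rewrite size_mkseq.
case: (leqP i (ell nu)) => Hi; first by rewrite nth_mkseq //; case/andP: (Hb i Hi).
by rewrite nth_default // size_mkseq.
Qed.

Lemma bottomE nu : bottom nu = height_vec nu.
Proof.
have Hmin : all (vle (height_vec nu)) (Vec nu) by apply/allP => v; apply: height_vec_le.
have := @mem_head_filter _ (fun m => all (vle m) (Vec nu)) _ [::] _ (height_vec_Vec nu) Hmin.
rewrite mem_filter -/(bottom nu) => /andP[/allP Hb Hbot].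
by apply: vle_anti; [apply: Hb; apply: height_vec_Vec | apply: height_vec_le].
Qed.

Section Sharp.
Variable nu : seq bool.
Hypothesis nN_gt0 : 0 < nN nu.
Local Notation F := (fk nu 0).
Local Notation nus := (nu_sharp nu).
Local Notation pi := (vec_sharp nu).

Lemma f0_lt_ell : F < ell nu.
Proof.
have [_ _ Hle] := fk_spec (leq0n (nN nu)).
by rewrite ltnNge -Hle // bh_ell // -ltnNge.
Qed.

Lemma bh_le_f0 i : i <= F -> bh nu i = 0.
Proof.
move=> Hi; have [_ Hf Hle] := fk_spec (leq0n (nN nu)).
by apply/eqP; rewrite -leqn0 Hle // (leq_trans Hi Hf).
Qed.

Lemma bh_f0S : bh nu F.+1 = 1.
Proof.
have [_ _ Hle] := fk_spec (leq0n (nN nu)).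
have := Hle F.+1 f0_lt_ell; rewrite ltnn => /negbT; rewrite -ltnNge.
by have := bhS_le nu F; rewrite (bh_le_f0 (leqnn F)); lia.
Qed.

Lemma bh_sharp j : bh nu (F.+1 + j) = (bh nus j).+1.
Proof. by rewrite bhD bh_f0S. Qed.

Lemma ell_sharp : ell nus = ell nu - F.+1.
Proof. exact: size_drop. Qed.

Lemma nN_sharp : nN nu = (nN nus).+1.
Proof.
rewrite -(bh_ell (leqnn (ell nus))) -bh_sharp bh_ell //.
by rewrite ell_sharp subnKC // f0_lt_ell.
Qed.

Lemma fk_sharp k : k <= nN nus -> fk nu k.+1 = F.+1 + fk nus k.
Proof.
move=> Hk; have Hk1 : k.+1 <= nN nu by rewrite nN_sharp.
have [Hfk Hfl _] := fk_spec Hk; have F_lt := f0_lt_ell.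
apply: fk_unique => // [|i Hi]; first by move: Hfl; rewrite ell_sharp; lia.
case: (leqP i F) => [HiF|/subnKC <-]; first by rewrite bh_le_f0 //; lia.
have [_ _ Hle] := fk_spec Hk.
rewrite bh_sharp ltnS leq_add2l Hle // ell_sharp; lia.
Qed.

Lemma nth_vec_sharp x j : nth 0 (pi x) j = (nth 0 x (F.+1 + j)).-1.
Proof.
case: (ltnP j (size (drop F.+1 x))) => Hj; first by rewrite (nth_map 0) // nth_drop.
by rewrite nth_default ?size_map // -nth_drop nth_default.
Qed.

Lemma size_vec_sharp x : size (pi x) = size x - F.+1.
Proof. by rewrite size_map size_drop. Qed.

Lemma Vec_f0_lt_size x : x \in Vec nu -> F < size x.
Proof. by move/Vec_size ->; rewrite ltnS ltnW // f0_lt_ell. Qed.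

Lemma Vec_nth_gt0 x i : x \in Vec nu -> F < i -> i <= ell nu -> 0 < nth 0 x i.
Proof.
rewrite memVec => /inVecP[_ _ Hb _] /subnKC <- Hi.
by case/andP: (Hb _ Hi); rewrite bh_sharp; lia.
Qed.

Lemma vec_sharp_Vec x : x \in Vec nu -> pi x \in Vec nus.
Proof.
move=> Hx; have x_gt0 := Vec_nth_gt0 Hx; have F_lt := f0_lt_ell.
move: Hx; rewrite !memVec => /inVecP[Hs Hf Hb Hj].
apply/inVecP; split.
- by rewrite size_vec_sharp Hs ell_sharp; lia.
- by move=> k Hk; rewrite nth_vec_sharp -fk_sharp // Hf // nN_sharp.
- move=> j; rewrite ell_sharp nth_vec_sharp => Hj'.
  by have := Hb (F.+1 + j); rewrite bh_sharp nN_sharp; lia.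
- move=> i j; rewrite ell_sharp !nth_vec_sharp => Hi Hj' Hij.
  have xi_gt0 : 0 < nth 0 x (F.+1 + i) by apply: x_gt0; lia.
  have Hxi : (nth 0 x (F.+1 + i)).-1 <= nN nus.
    by have := Hb (F.+1 + i); rewrite nN_sharp; lia.
  move=> Hfj; have Hfj' : F.+1 + j <= fk nu (nth 0 x (F.+1 + i)).
    by rewrite -(prednK xi_gt0) fk_sharp // leq_add2l.
  by rewrite -!subn1 leq_sub2r // Hj //; lia.
Qed.

Lemma vec_sharp_mono a b : vle a b -> vle (pi a) (pi b).
Proof.
case/(vle_take_drop F.+1) => _; apply: vle_map => m n /(leq_sub2r 1).
by rewrite !subn1.
Qed.

Definition vec_lift (x z : seq nat) := take F.+1 x ++ map S z.

Lemma size_vec_lift x z : F < size x -> size (vec_lift x z) = F.+1 + size z.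
Proof. by move=> HF; rewrite size_cat size_takel // size_map. Qed.

Lemma nth_vec_lift_lo x z i : F < size x -> i <= F -> nth 0 (vec_lift x z) i = nth 0 x i.
Proof. by move=> HF Hi; rewrite nth_cat size_takel // ltnS Hi nth_take. Qed.

Lemma nth_vec_lift_hi x z j : F < size x -> j < size z ->
  nth 0 (vec_lift x z) (F.+1 + j) = (nth 0 z j).+1.
Proof.
by move=> HF Hj; rewrite nth_cat size_takel // ltnNge leq_addr addKn (nth_map 0).
Qed.

Lemma take_vec_lift x z : F < size x -> take F.+1 (vec_lift x z) = take F.+1 x.
Proof. by move=> HF; rewrite take_size_cat // size_takel. Qed.

Lemma vec_sharp_lift x z : F < size x -> pi (vec_lift x z) = z.
Proof. by move=> HF; rewrite /vec_sharp drop_size_cat ?size_takel // -map_comp map_id. Qed.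

Lemma vec_lift_sharp x : x \in Vec nu -> vec_lift x (pi x) = x.
Proof.
move=> Hx; rewrite /vec_lift -map_comp map_id_in ?cat_take_drop // => a.
case/(nthP 0) => i; rewrite size_drop (Vec_size Hx) => Hi <- /=.
by rewrite nth_drop prednK // (Vec_nth_gt0 Hx); lia.
Qed.

Lemma vle_vec_lift a b z w : F < size a -> F < size b ->
  vle (take F.+1 a) (take F.+1 b) -> vle z w -> vle (vec_lift a z) (vec_lift b w).
Proof. by move=> Ha Hb Hab Hzw; rewrite /vec_lift vle_cat ?size_takel // Hab vle_map. Qed.

Lemma vec_lift_le x z : x \in Vec nu -> vle z (pi x) -> vle (vec_lift x z) x.
Proof.
move=> Hx Hz; rewrite -{2}(vec_lift_sharp Hx).
by apply: vle_vec_lift (vle_refl _) Hz; apply: Vec_f0_lt_size.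
Qed.

Lemma vec_lift_Vec x z : x \in Vec nu -> z \in Vec nus -> vle z (pi x) ->
  vec_lift x z \in Vec nu.
Proof.
move=> Hx Hz Hzx; have Hlx := vec_lift_le Hx Hzx; have F_lt := f0_lt_ell.
have HF := Vec_f0_lt_size Hx; have Sz := Vec_size Hz; rewrite ell_sharp in Sz.
have nth_hi j : F.+1 + j <= ell nu -> nth 0 (vec_lift x z) (F.+1 + j) = (nth 0 z j).+1.
  by move=> Hj; rewrite nth_vec_lift_hi // Sz; lia.
move: Hx Hz; rewrite !memVec => /inVecP[_ Xf Xb Xj] /inVecP[_ Zf Zb Zj].
rewrite ell_sharp in Zb Zj; apply/inVecP; split.
- by rewrite size_vec_lift // Sz; lia.
- case=> [_|k Hk]; first by rewrite nth_vec_lift_lo // Xf.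
  have Hk' : k <= nN nus by rewrite -ltnS -nN_sharp.
  by rewrite fk_sharp // nth_hi ?Zf // -fk_sharp // fk_le.
- move=> i; case: (leqP i F) => [HiF Hi|/subnKC <- Hi]; first by rewrite nth_vec_lift_lo // Xb.
  by rewrite nth_hi // bh_sharp nN_sharp !ltnS Zb //; lia.
- move=> i j Hi Hj Hij; case: (leqP j F) => HjF.
    have HiF : i <= F by rewrite ltnW // (leq_trans Hij HjF).
    by rewrite !nth_vec_lift_lo //; apply: Xj.
  case: (leqP i F) => HiF.
    rewrite (nth_vec_lift_lo _ HF HiF) => Hfj.
    exact: leq_trans (vle_nth j Hlx) (Xj i j Hi Hj Hij Hfj).
  move: Hi Hj Hij; rewrite -(subnKC HiF) -(subnKC HjF) => Hi Hj Hij.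
  have /andP[_ Hzi] : bh nus (i - F.+1) <= nth 0 z (i - F.+1) <= nN nus by apply: Zb; lia.
  rewrite !nth_hi // fk_sharp // ltnS leq_add2l => Hfj.
  by apply: Zj; lia.
Qed.

Lemma vec_sharp_vmin a b : size a = size b -> pi (vmin a b) = vmin (pi a) (pi b).
Proof.
move=> Hs; apply: (eq_from_nth (x0 := 0)) => [|i _].
  by rewrite size_vmin !size_vec_sharp size_vmin.
by rewrite nth_vmin ?size_vec_sharp ?Hs // !nth_vec_sharp nth_vmin //; lia.
Qed.

Lemma covby_vec_sharp x y : x \in Vec nu -> covby nu y x ->
  pi y = pi x \/ covby nus (pi y) (pi x).
Proof.
move=> Hx /and3P[Hy /andP[Hyx _] Hnone].
have [|Hpi] := eqVneq (pi y) (pi x); [by left | right].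
apply/and3P; split; [exact: vec_sharp_Vec | by rewrite /vlt vec_sharp_mono |].
apply/hasP => -[u Hu /andP[/andP[Hyu Hyu'] /andP[Hux Hux']]].
have HFx := Vec_f0_lt_size Hx.
have HFy := Vec_f0_lt_size Hy.
move/hasP: Hnone; apply; exists (vec_lift x u); first exact: vec_lift_Vec.
apply/andP; split; apply/andP; split.
- rewrite -(vec_lift_sharp Hy); apply: vle_vec_lift => //.
  exact: (vle_take_drop _ Hyx).1.
- by apply: contra Hyu' => /eqP ->; rewrite vec_sharp_lift.
- exact: vec_lift_le.
- by apply: contra Hux' => /eqP {1}<-; rewrite vec_sharp_lift.
Qed.

Lemma covby_vec_lift x z : x \in Vec nu -> covby nus z (pi x) ->
  exists2 y, covby nu y x & pi y = z.
Proof.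
move=> Hx /and3P[Hz /andP[Hzx Hneq] Hnone].
have HFx := Vec_f0_lt_size Hx.
have Hlx : vlt (vec_lift x z) x.
  rewrite /vlt vec_lift_le //; apply: contra Hneq => /eqP Ex.
  by rewrite -{1}Ex vec_sharp_lift.
have [y Hyx Hly] := vlt_covby (vec_lift_Vec Hx Hz Hzx) Hlx.
exists y => //; case/and3P: Hyx => Hy /andP[Hyx Hyx'] _.
have Hzy : vle z (pi y) by rewrite -(vec_sharp_lift z HFx) vec_sharp_mono.
have [|Hpi] := eqVneq (pi y) (pi x); last first.
  apply/eqP; apply: contraNT Hnone => Hyz; apply/hasP; exists (pi y); first exact: vec_sharp_Vec.
  by rewrite /vlt Hzy vec_sharp_mono // Hpi eq_sym Hyz.
(* [x] and [y] agree after [f0], and [y] dominates [x] up to [f0] *)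
move=> Epi; case/negP: Hyx'; apply/eqP/vle_anti => //.
rewrite -(vec_lift_sharp Hx) -(vec_lift_sharp Hy) Epi.
have HFy := Vec_f0_lt_size Hy.
apply: vle_vec_lift (vle_refl _) => //.
by rewrite -(take_vec_lift z HFx); apply: (vle_take_drop _ Hly).1.
Qed.

Lemma vec_sharp_Pop_set x y : x \in Vec nu -> y \in Pop_set nu x ->
  pi y \in Pop_set nus (pi x).
Proof.
move=> Hx; rewrite !mem_Pop_set => /orP[/eqP -> | /(covby_vec_sharp Hx) [-> | ->]];
  by rewrite ?eqxx ?orbT.
Qed.

Lemma Pop_set_vec_sharp x z : x \in Vec nu -> z \in Pop_set nus (pi x) ->
  exists2 y, y \in Pop_set nu x & pi y = z.
Proof.
move=> Hx; rewrite mem_Pop_set => /orP[/eqP -> | /(covby_vec_lift Hx) [y Hy <-]].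
  by exists x; rewrite ?mem_Pop_set ?eqxx.
by exists y; rewrite ?mem_Pop_set ?Hy ?orbT.
Qed.

Lemma vec_lift_lower_bound x (L : seq (seq nat)) z :
  x \in Vec nu -> z \in Vec nus -> vle z (pi x) ->
  {in L, forall y, y \in Vec nu /\ vle z (pi y)} ->
  exists2 w, w \in Vec nu & pi w = z /\ {in L, forall y, vle w y}.
Proof.
move=> Hx Hz Hzx; elim: L => [|y L IH] HL.
  exists (vec_lift x z); first exact: vec_lift_Vec.
  by rewrite vec_sharp_lift ?Vec_f0_lt_size.
have [Hy Hzy] := HL y (mem_head _ _).
have [w Hw [Ew HwL]] := IH (fun y' Hy' => HL y' (@mem_behead _ (y :: L) _ Hy')).
set u := vec_lift y z; have Hu : u \in Vec nu by apply: vec_lift_Vec.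
have Suw : size u = size w by rewrite (Vec_size Hu) (Vec_size Hw).
have [Hmu Hmw] : vle (vmin u w) u /\ vle (vmin u w) w.
  by apply/andP; rewrite -vle_vmin // vle_refl.
exists (vmin u w); first exact: vmin_Vec.
split; first by rewrite vec_sharp_vmin // Ew vec_sharp_lift ?Vec_f0_lt_size // vmin_id.
move=> y'; rewrite inE => /orP[/eqP -> | Hy'].
  exact: vle_trans Hmu (vec_lift_le Hy Hzy).
exact: vle_trans Hmw (HwL y' Hy').
Qed.

Lemma vec_sharp_Pop x : x \in Vec nu -> pi (Pop nu x) = Pop nus (pi x).
Proof.
move=> Hx; have Hxs := vec_sharp_Vec Hx.
have Hm := Pop_glb Hx; have Hm' := Pop_glb Hxs.
apply: vle_anti.
  apply: isglb_max Hm' _ _; first by apply/vec_sharp_Vec/Pop_Vec.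
  move=> z /(Pop_set_vec_sharp Hx) [y Hy <-].
  exact/vec_sharp_mono/(isglb_lb Hm).
have HL : {in Pop_set nu x, forall y, y \in Vec nu /\ vle (Pop nus (pi x)) (pi y)}.
  move=> y Hy; split; first exact: Pop_set_Vec Hy.
  exact/(isglb_lb Hm')/vec_sharp_Pop_set.
have [w Hw [<- HwL]] := vec_lift_lower_bound Hx (Pop_Vec Hxs) (HL x (mem_head _ _)).2 HL.
exact/vec_sharp_mono/(isglb_max Hm).
Qed.

Lemma vec_sharp_height_vec : pi (height_vec nu) = height_vec nus.
Proof.
have F_lt := f0_lt_ell.
apply: (eq_from_nth (x0 := 0)) => [|i].
  by rewrite size_vec_sharp !size_mkseq ell_sharp; lia.
rewrite size_vec_sharp size_mkseq => Hi.
have Hi' : i <= ell nus by rewrite ell_sharp; lia.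
by rewrite nth_vec_sharp !nth_mkseq ?bh_sharp //; lia.
Qed.

Lemma vec_sharp_iter_Pop t x : x \in Vec nu ->
  pi (iter t (Pop nu) x) = iter t (Pop nus) (pi x).
Proof.
move=> Hx; elim: t => //= t IH.
by rewrite -IH vec_sharp_Pop // iter_Pop_Vec.
Qed.
End Sharp.

Theorem corollary3p11 (nu : seq bool) (t : nat) (v : seq nat) :
  1 <= nN nu ->
  v \in Vec nu ->
  pop_sortable nu t v ->
  pop_sortable (nu_sharp nu) t (vec_sharp nu v).
Proof.
move=> nN_gt0 Hv; rewrite /pop_sortable !bottomE => Hsort.
by rewrite -vec_sharp_iter_Pop // Hsort vec_sharp_height_vec.
Qed.
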